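(* Let $G=(X,\Sigma,\longrightarrow,X_0)$ and $R=(Z,\Sigma,\longrightarrow,Z_0)$ be automata. (1) $\mathit{SPR}(G,R)\neq\emptyset$ iff there exists $W_0\in E^{\uparrow}_{(G,R)}$ such that $\forall x_0\in X_0\,\exists z_0\in Z_0\,((x_0,z_0)\in W_0)$. (2) If $\mathit{SPR}(G,R)\neq\emptyset$, then $E^{\uparrow}_{(G,R)}=\bigcup_{W\in E^{\uparrow}_{(G,R)}}\wp(W)$.
   Context: An automaton is a 4-tuple $A=(Q,\Sigma,\longrightarrow,Q_0)$ with state set $Q$, finite event set $\Sigma$, ${\longrightarrow}\subseteq Q\times\Sigma\times Q$ and $\emptyset\neq Q_0\subseteq Q$. Write $q\xrightarrow{\sigma}q'$ for $(q,\sigma,q')\in{\longrightarrow}$, $q\xrightarrow{\sigma}$ if some such $q'$ exists; extend to strings. A state is reachable if reached from an initial state by some string. Events are partitioned into uncontrollable $\Sigma_{uc}$ and controllable $\Sigma_c$; $\Sigma_r\subseteq\Sigma$ is a fixed set of required events. For a supervisor $S=(Y,\Sigma,\longrightarrow,Y_0)$, $S\|G=(Y\times X,\Sigma,\longrightarrow,Y_0\times X_0)$ with $(y,x)\xrightarrow{\sigma}(y',x')$ iff $y\xrightarrow{\sigma}y'$ and $x\xrightarrow{\sigma}x'$; $S$ is $\Sigma_{uc}$-admissible w.r.t. $G$ if for every reachable $(y,x)$ of $S\|G$ and $\sigma\in\Sigma_{uc}$, $x\xrightarrow{\sigma}$ implies $(y,x)\xrightarrow{\sigma}$. For automata $A_1,A_2$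 (state sets $Q_1,Q_2$, initial sets $Q_{01},Q_{02}$), $\Phi\subseteq Q_1\times Q_2$ is a cc-simulation if (initial state) every $q_0\in Q_{01}$ has $p_0\in Q_{02}$ with $(q_0,p_0)\in\Phi$; (forward) for $(q,p)\in\Phi$, $\sigma\in\Sigma$, $q\xrightarrow{\sigma}q'$ there is $p'$ with $p\xrightarrow{\sigma}p'$, $(q',p')\in\Phi$; ($\Sigma_r$-backward) for $(q,p)\in\Phi$, $\sigma\in\Sigma_r$, $p\xrightarrow{\sigma}p'$ there is $q'$ with $q\xrightarrow{\sigma}q'$, $(q',p')\in\Phi$. $A_1\sqsubseteq_{cc}A_2$ means one exists. $\mathit{SPR}(G,R)$ is the set of $\Sigma_{uc}$-admissible supervisors $S$ with $S\|G\sqsubseteq_{cc}R$. For $W,W'\subseteq X\times Z$: $\mathit{match}_{G,R}(W,\sigma,W')$ iff for all $(x,z)\in W$ and $x\xrightarrow{\sigma}x'$ there is $z'$ with $z\xrightarrow{\sigma}z'$ and $(x',z')\in W'$. $F_{(G,R)}:\wp(\wp(X\times Z))\to\wp(\wp(X\times Z))$ is defined by: $W\in F_{(G,R)}(E)$ iff $W\in E$ and (1) for every $\sigma\in\Sigma_{uc}$ there is $W'\in E$ with $\mathit{match}_{G,R}(W,\sigma,W')$, and (2) for every $(x,z)\in W$, $\sigma\in\Sigma_r$, $z'$ with $z\xrightarrow{\sigma}z'$ there exist $x'\in X$, $W'\in E$ with $x\xrightarrow{\sigma}x'$, $(x',z')\in W'$ and $\mathit{match}_{G,R}(W,\sigma,W')$.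 $F_{(G,R)}$ is monotone w.r.t. $\subseteq$, and $E^{\uparrow}_{(G,R)}$ denotes its greatest fixpoint. *)

From mathcomp Require Import all_boot.
Unset Implicit Arguments.
Unset Strict Implicit.
Unset Printing Implicit Defensive.

Record automaton (Sigma : Type) : Type := Automaton {
  state : Type;
  trans : state -> Sigma -> state -> Prop;
  init : state -> Prop;
  init_nonempty : exists q, init q
}.
Arguments state {Sigma} a.
Arguments trans {Sigma} a _ _ _.
Arguments init {Sigma} a _.
Arguments init_nonempty {Sigma} a.

Section Defs.
Variable Sigma : Type.

Inductive reachable (A : automaton Sigma) : state A -> Prop :=
| reach_init q : init A q -> reachable A q
| reach_step q s q' : reachable A q -> trans A q s q' -> reachable A q'.

Lemma sync_init_nonempty (S G : automaton Sigma) :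
  exists p : state S * state G, init S p.1 /\ init G p.2.
Proof.
case: (init_nonempty S) => y Hy; case: (init_nonempty G) => x Hx.
by exists (y, x).
Qed.

Definition sync (S G : automaton Sigma) : automaton Sigma :=
  @Automaton Sigma (state S * state G)
    (fun p s p' => trans S p.1 s p'.1 /\ trans G p.2 s p'.2)
    (fun p => init S p.1 /\ init G p.2)
    (sync_init_nonempty S G).

Definition admissible (uc : Sigma -> bool) (S G : automaton Sigma) : Prop :=
  forall (y : state S) (x : state G), reachable (sync S G) (y, x) ->
  forall s, uc s -> (exists x', trans G x s x') ->
  exists p', trans (sync S G) (y, x) s p'.

Definition cc_simulation (req : Sigma -> bool) (A1 A2 : automaton Sigma)
  (Phi : state A1 -> state A2 -> Prop) : Prop :=
  (forall q0, init A1 q0 -> exists p0, init A2 p0 /\ Phi q0 p0) /\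
  (forall q p, Phi q p -> forall s q', trans A1 q s q' ->
     exists p', trans A2 p s p' /\ Phi q' p') /\
  (forall q p, Phi q p -> forall s, req s -> forall p', trans A2 p s p' ->
     exists q', trans A1 q s q' /\ Phi q' p').

Definition cc_le (req : Sigma -> bool) (A1 A2 : automaton Sigma) : Prop :=
  exists Phi, cc_simulation req A1 A2 Phi.

Definition SPR (uc req : Sigma -> bool) (G R : automaton Sigma)
  (S : automaton Sigma) : Prop :=
  admissible uc S G /\ cc_le req (sync S G) R.

Definition SPR_nonempty (uc req : Sigma -> bool) (G R : automaton Sigma) : Prop :=
  exists S : automaton Sigma, SPR uc req G R S.

Definition match_GR (G R : automaton Sigma)
  (W : state G * state R -> Prop) (s : Sigma)
  (W' : state G * state R -> Prop) : Prop :=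
  forall x z, W (x, z) -> forall x', trans G x s x' ->
  exists z', trans R z s z' /\ W' (x', z').

Definition F_GR (uc req : Sigma -> bool) (G R : automaton Sigma)
  (E : (state G * state R -> Prop) -> Prop)
  (W : state G * state R -> Prop) : Prop :=
  E W /\
  (forall s, uc s -> exists W', E W' /\ match_GR G R W s W') /\
  (forall x z, W (x, z) -> forall s, req s -> forall z', trans R z s z' ->
     exists x' W', trans G x s x' /\ E W' /\ W' (x', z') /\ match_GR G R W s W').

(* Greatest fixpoint of the monotone operator F_{(G,R)} (Knaster-Tarski:
   union of all post-fixpoints E with E \subseteq F(E)). *)
Definition Eup (uc req : Sigma -> bool) (G R : automaton Sigma)
  (W : state G * state R -> Prop) : Prop :=
  exists E : (state G * state R -> Prop) -> Prop,
    (forall V, E V -> F_GR uc req G R E V) /\ E W.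

End Defs.

Arguments reachable {Sigma} A _.
Arguments sync {Sigma} S G.
Arguments admissible {Sigma} uc S G.
Arguments cc_simulation {Sigma} req A1 A2 Phi.
Arguments cc_le {Sigma} req A1 A2.
Arguments SPR {Sigma} uc req G R S.
Arguments SPR_nonempty {Sigma} uc req G R.
Arguments match_GR {Sigma} G R W s W'.
Arguments F_GR {Sigma} uc req G R E W.
Arguments Eup {Sigma} uc req G R W.

(** For a supervisor [S] in SPR(G,R) with cc-simulation [Phi], the sets
    [slice y] of pairs [(x, z)] such that [(y, x)] is reachable in [S || G]
    and [Phi ((y, x), z)] form a post-fixpoint of [F], and the slice of an
    initial supervisor state covers the initial plant states.  Conversely,
    the elements of the greatest fixpoint, with [match] as transition
    relation, are the states of a supervisor; relating [((W, x), z)] iff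
    [(x, z)] lies in [W] is then a cc-simulation.  Downward closure holds
    because the conditions of [F] only get weaker on subsets. *)
From Stdlib Require Import Classical_Prop.
From mathcomp Require Import all_boot.

Section SupervisorsAndFixpoint.
Variables (Sigma : Type) (uc req : Sigma -> bool) (G R : automaton Sigma).

Local Notation pairs := (state G * state R -> Prop).

Lemma match_GR_subl {V W W' : pairs} {s} :
  (forall p, V p -> W p) -> match_GR G R W s W' -> match_GR G R V s W'.
Proof. by move=> VW mW x z /VW; apply: mW. Qed.

Lemma F_GR_sub {E E' : pairs -> Prop} {V W : pairs} :
  (forall U, E U -> E' U) -> E' V -> (forall p, V p -> W p) ->
  F_GR uc req G R E W -> F_GR uc req G R E' V.
Proof.
move=> EE' E'V VW [_ [Fuc Freq]]; split=> //; split.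
- move=> s /Fuc [W' [EW' mW']].
  by exists W'; split; [apply: EE' | apply: match_GR_subl mW'].
- move=> x z /VW Wxz s rs z' /(Freq _ _ Wxz s rs) [x' [W' [Gx' [EW' [W'xz' mW']]]]].
  exists x', W'; split=> //; split; first exact: EE'.
  by split=> //; apply: match_GR_subl mW'.
Qed.

Lemma Eup_post_fixpoint {W : pairs} :
  Eup uc req G R W -> F_GR uc req G R (Eup uc req G R) W.
Proof.
move=> [E [postE EW]]; have EEup U : E U -> Eup uc req G R U by exists E.
exact: F_GR_sub (EEup W EW) _ (postE W EW).
Qed.

Lemma Eup_downward_closed {V W : pairs} :
  Eup uc req G R W -> (forall p, V p -> W p) -> Eup uc req G R V.
Proof.
move=> EupW VW.
exists (fun U => exists W, Eup uc req G R W /\ forall p, U p -> W p).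
split; last by exists W.
move=> U [W1 [EupW1 UW1]]; apply: F_GR_sub (Eup_post_fixpoint EupW1) => //.
- by move=> U' EupU'; exists U'.
- by exists W1.
Qed.

Section SupervisorSlices.
Variable S : automaton Sigma.
Variable Phi : state (sync S G) -> state R -> Prop.
Hypothesis admS : admissible uc S G.
Hypothesis simPhi : cc_simulation req (sync S G) R Phi.

Definition slice (y : state S) (p : state G * state R) : Prop :=
  reachable (sync S G) (y, p.1) /\ Phi (y, p.1) p.2.

Lemma match_slice_step y s y' :
  trans S y s y' -> match_GR G R (slice y) s (slice y').
Proof.
move=> Sy x z [reach_yx Phi_yxz] x' Gx'.
have SGstep : trans (sync S G) (y, x) s (y', x') by [].
have [_ [fwd _]] := simPhi.
have [z' [Rz' Phi']] := fwd _ _ Phi_yxz s _ SGstep.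
by exists z'; do !split=> //; apply: reach_step reach_yx SGstep.
Qed.

(* If [y] is blocked on an uncontrollable [s], admissibility forces [slice y]
   to contain no pair whose plant state can do [s], so [slice y] itself
   matches. *)
Lemma slice_match_uncontrollable y s :
  uc s -> exists y', match_GR G R (slice y) s (slice y').
Proof.
move=> ucs; case: (classic (exists y', trans S y s y')) => [[y' Sy]|blocked].
  by exists y'; apply: match_slice_step.
exists y => x z [reach_yx _] x' Gx'; exfalso; apply: blocked.
have [[y' x''] [Sy _]] := admS _ _ reach_yx s ucs (ex_intro _ x' Gx').
by exists y'.
Qed.

Lemma Eup_slice y : Eup uc req G R (slice y).
Proof.
exists (fun V => exists y, V = slice y); split; last by exists y.
move=> _ [{}y ->]; split; first by exists y.
split.
- move=> s /(slice_match_uncontrollable y) [y' m].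
  by exists (slice y'); split; first exists y'.
- move=> x z [reach_yx Phi_yxz] s rs z' Rz'.
  have [_ [_ bwd]] := simPhi.
  have [[y' x'] [[Sy Gx'] Phi']] := bwd _ _ Phi_yxz s rs z' Rz'.
  exists x', (slice y'); split=> //; split; first by exists y'.
  split; last exact: match_slice_step.
  by split=> //; apply: reach_step reach_yx (conj Sy Gx').
Qed.

Lemma slice_covers_init y0 x0 :
  init S y0 -> init G x0 -> exists z0, init R z0 /\ slice y0 (x0, z0).
Proof.
move=> Sy0 Gx0; have [initPhi _] := simPhi.
have [z0 [Rz0 Phi0]] := initPhi (y0, x0) (conj Sy0 Gx0).
by exists z0; do !split=> //; apply: reach_init.
Qed.

End SupervisorSlices.

Section FixpointSupervisor.
Variables (W0 : state G * state R -> Prop) (EupW0 : Eup uc req G R W0).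

Definition Eup_supervisor : automaton Sigma :=
  @Automaton Sigma {W | Eup uc req G R W}
    (fun w s w' => match_GR G R (sval w) s (sval w'))
    (fun w => sval w = W0)
    (ex_intro _ (exist _ W0 EupW0) erefl).

Lemma Eup_supervisor_admissible : admissible uc Eup_supervisor G.
Proof.
move=> [W EupW] x _ s ucs [x' Gx'].
have [_ [Fuc _]] := Eup_post_fixpoint EupW.
have [W' [EupW' mW']] := Fuc s ucs.
by exists (exist _ W' EupW', x').
Qed.

Lemma Eup_supervisor_simulation :
  (forall x0, init G x0 -> exists z0, init R z0 /\ W0 (x0, z0)) ->
  cc_simulation req (sync Eup_supervisor G) R (fun p z => sval p.1 (p.2, z)).
Proof.
move=> coverW0; split; [|split].
- move=> [[W EupW] x0] [/= -> Gx0].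
  by have [z0 [Rz0 W0xz]] := coverW0 x0 Gx0; exists z0.
- move=> [[W EupW] x] z /= Wxz s [[W' EupW'] x'] [/= mW' Gx'].
  exact: mW' Wxz _ Gx'.
- move=> [[W EupW] x] z /= Wxz s rs z' Rz'.
  have [_ [_ Freq]] := Eup_post_fixpoint EupW.
  have [x' [W' [Gx' [EupW' [W'xz' mW']]]]] := Freq x z Wxz s rs z' Rz'.
  by exists (exist _ W' EupW', x').
Qed.

End FixpointSupervisor.

End SupervisorsAndFixpoint.

Arguments slice {Sigma G R S} Phi y p.
Arguments Eup_slice {Sigma uc req G R S Phi} admS simPhi y.
Arguments slice_covers_init {Sigma req G R S Phi} simPhi {y0 x0}.
Arguments Eup_supervisor {Sigma uc req G R W0} EupW0.

Theorem corollary2 (Sigma : finType) (uc req : pred Sigma)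
  (G R : automaton Sigma) :
  (SPR_nonempty uc req G R <->
     exists W0, Eup uc req G R W0 /\
       (forall x0, init G x0 -> exists z0, init R z0 /\ W0 (x0, z0))) /\
  (SPR_nonempty uc req G R ->
     forall V : state G * state R -> Prop,
       Eup uc req G R V <->
       exists W, Eup uc req G R W /\ (forall p, V p -> W p)).
Proof.
split; last first.
  move=> _ V; split; first by exists V.
  by move=> [W [EupW VW]]; apply: Eup_downward_closed EupW VW.
split.
- move=> [S [admS [Phi simPhi]]]; have [y0 Sy0] := init_nonempty S.
  exists (slice Phi y0); split; first exact: Eup_slice.
  by move=> x0; exact: (slice_covers_init simPhi Sy0).
- move=> [W0 [EupW0 coverW0]]; exists (Eup_supervisor EupW0); split.
    exact: Eup_supervisor_admissible.
  by eexists; apply: Eup_supervisor_simulation.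
Qed.
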